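(* Let $p$ be a prime, $w\ge1$, and $\mu>0$ a real number with $2^\mu$ an integer; let $c_\mu=\frac{2^\mu\sin(\pi/2^\mu)}{p\sin(\pi/p)}$. For any sets $A_1,\dots,A_{2^\mu}\subseteq\mathbb{F}_{p^w}$ with $\sum_{i=1}^{2^\mu}|A_i|=p^w$, \[ \sum_{i=1}^{2^\mu}\max_{\alpha\in\mathbb{F}_{p^w}\setminus\{0\}}\left|\widehat{\mathbb 1_{A_i}}(\alpha)\right|\le c_\mu . \]
   Context: For $A\subseteq\mathbb{F}_{p^w}$, $\mathbb 1_A$ is its characteristic function. $\mathrm{Tr}$ is the trace $\mathbb{F}_{p^w}\to\mathbb{F}_p$ (values in $\{0,\dots,p-1\}$), $\omega_p=e^{2\pi\mathbf i/p}$, and $\hat f(\alpha)=p^{-w}\sum_{x\in\mathbb{F}_{p^w}}f(x)\omega_p^{\mathrm{Tr}(\alpha x)}$. *)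

From HB Require Import structures.
From mathcomp Require Import all_boot all_order all_algebra all_field.
From mathcomp Require Import all_classical all_reals all_analysis.
From mathcomp Require Import complex.
Set Implicit Arguments. Unset Strict Implicit. Unset Printing Implicit Defensive.
Import Order.TTheory GRing.Theory Num.Theory.
Local Open Scope ring_scope.

(* Absolute trace F_{p^w} -> F_p, as an element of F: Tr x = sum_{i<w} x^(p^i). *)
Definition trF (F : finFieldType) (p w : nat) (x : F) : F :=
  \sum_(i < w) x ^+ (p ^ i).

(* The trace viewed as a value in {0,...,p-1}: the k < p with k%:R = Tr x. *)
Definition trnat (F : finFieldType) (p w : nat) (x : F) : nat :=
  oapp (@nat_of_ord p) 0%N [pick k : 'I_p | (k%:R : F) == trF p w x].

Definition omega (R : realType) (p : nat) : R[i] :=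
  (cos (2 * pi / p%:R) +i* sin (2 * pi / p%:R))%C.

Definition fhat (R : realType) (F : finFieldType) (p w : nat) (f : F -> R[i])
  (a : F) : R[i] :=
  ((p ^ w)%:R)^-1 * \sum_(x : F) f x * omega R p ^+ trnat p w (a * x).

Definition charf (R : realType) (F : finFieldType) (A : {set F}) : F -> R[i] :=
  fun x => (x \in A)%:R.

From HB Require Import structures.
From mathcomp Require Import all_boot all_order all_algebra all_field.
From mathcomp Require Import all_classical all_reals all_analysis.
From mathcomp Require Import complex.
From mathcomp Require Import ring lra.
Import Order.TTheory GRing.Theory Num.Theory.
Import numFieldNormedType.Exports.
Set Implicit Arguments. Unset Strict Implicit. Unset Printing Implicit Defensive.
Local Open Scope ring_scope.

(* For a != 0 the map x |-> Tr (a x) is onto F_p with fibers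
      of size p^(w-1), so hat(1_A)(a) = (1/p) sum_k t_k omega^k where t_k in
      [0, 1] is the fraction of the k-th fiber lying in A, and sum_k t_k =
      p |A| / p^w.
   2. Weighted roots of unity.  If t_k in [0, 1] have sum S, then
      |sum_k t_k omega^k| sin (pi / p) <= sin (pi S / p).  Projecting the sum
      on its own direction and using 2 sin (pi/p) cos u = sin (u + pi/p) -
      sin (u - pi/p), the left side becomes half a weighted sum of increments
      of sin over a subdivision of one period.  Each weighted increment is at
      most a linear term plus the increment of a potential (a primitive of
      (cos - cos a)^+, a = pi S / p), and the sum telescopes to 2 sin a.
   3. Hence max_(a != 0) |hat(1_A)(a)| <= sin (pi |A| / p^w) / (p sin (pi/p)),
      and Jensen's inequality for sin, concave on [0, pi], bounds the sum of
      the right-hand sides over the A_i by n sin (pi / n) / (p sin (pi/p)). *)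

Section Trigonometry.
Variable R : realType.
Implicit Types a c u v x y : R.

Lemma cos_nonincr x y : 0 <= x -> x <= y -> y <= pi -> cos y <= cos x.
Proof.
move=> x0 xy ypi; have [->|nxy] := eqVneq x y; first by [].
apply/ltW; rewrite ltr_cos ?in_itv /= ?x0 ?(le_trans x0 xy) ?ypi ?(le_trans xy ypi) //.
by rewrite lt_neqAle nxy xy.
Qed.

Lemma cos_ge_near0 a c : a <= pi -> `|c| <= a -> cos a <= cos c.
Proof. by move=> api ca; rewrite -(cos_norm c); apply: cos_nonincr. Qed.

Lemma cos_le_far a c : 0 <= a -> a <= c -> c <= pi *+ 2 - a -> cos c <= cos a.
Proof.
move=> a0 ac cb; have [cpi|pic] := leP c pi; first exact: cos_nonincr.
have -> : cos c = cos (pi *+ 2 - c) by rewrite addrC cosD2pi cosN.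
by apply: cos_nonincr; rewrite ?mulr2n; lra.
Qed.

Lemma sin_mvt u v : u <= v ->
  exists2 c, u <= c <= v & sin v - sin u = cos c * (v - u).
Proof.
rewrite le_eqVlt => /predU1P[->|uv]; first by exists v; rewrite ?lexx // !subrr mulr0.
have [c] : exists2 c, c \in `]u, v[ & sin v - sin u = cos c * (v - u).
  apply: (MVT uv) => //; exact/continuous_subspaceT/continuous_sin.
by rewrite in_itv /= => /andP[uc cv] ->; exists c; rewrite ?ltW.
Qed.

Lemma sin_le_tangent x0 y : 0 <= x0 -> x0 <= pi -> 0 <= y -> y <= pi ->
  sin y <= sin x0 + cos x0 * (y - x0).
Proof.
move=> x00 x0pi y0 ypi; have [xy|/ltW yx] := leP x0 y.
  have [c /andP[xc cy] E] := sin_mvt xy.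
  have : cos c <= cos x0 by apply: cos_nonincr => //; lra.
  have : 0 <= y - x0 by rewrite subr_ge0.
  nra.
have [c /andP[yc cx] E] := sin_mvt yx.
have : cos x0 <= cos c by apply: cos_nonincr => //; lra.
have : 0 <= x0 - y by rewrite subr_ge0.
nra.
Qed.

Lemma sin_pi_div_gt0 (k : nat) : (1 < k)%N -> 0 < sin (pi / k%:R) :> R.
Proof.
move=> k1; have k0 : 0 < k%:R :> R by rewrite ltr0n ltnW.
apply: sin_gt0_pi; rewrite divr_gt0 ?pi_gt0 //=.
by rewrite ltr_pdivrMr // ltr_pMr ?pi_gt0 // ltr1n.
Qed.

Lemma sum_sin_le_jensen (n : nat) (x : 'I_n -> R) : (0 < n)%N ->
  (forall i, 0 <= x i <= pi) ->
  \sum_(i < n) sin (x i) <= n%:R * sin ((\sum_(i < n) x i) / n%:R).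
Proof.
move=> n0 x0pi; have nR : 0 < n%:R :> R by rewrite ltr0n.
set m := (\sum_i x i) / n%:R.
have [m0 mpi] : 0 <= m /\ m <= pi.
  rewrite /m divr_ge0 ?ler0n ?sumr_ge0 // => [|i _]; last by case/andP: (x0pi i).
  split=> //; rewrite ler_pdivrMr // mulr_natr.
  apply: le_trans (_ : \sum_(i < n) pi <= _); last by rewrite sumr_const card_ord.
  by apply: ler_sum => i _; case/andP: (x0pi i).
apply: le_trans (_ : \sum_(i < n) (sin m + cos m * (x i - m)) <= _).
  by apply: ler_sum => i _; case/andP: (x0pi i) => ? ?; apply: sin_le_tangent.
rewrite big_split /= sumr_const card_ord -mulr_sumr sumrB sumr_const card_ord.
by rewrite -[X in _ - X]mulr_natr divfK ?gt_eqF // subrr mulr0 addr0 mulr_natl.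
Qed.

End Trigonometry.

Definition sin_increments (R : realType) (p : nat) (t : nat -> R) (x0 : R) : R :=
  \sum_(0 <= j < p) t j * (sin (x0 + j.+1%:R * (pi *+ 2 / p%:R))
                           - sin (x0 + j%:R * (pi *+ 2 / p%:R))).

Lemma sin_increments_periodic (R : realType) (p : nat) (t : nat -> R) (x0 : R) :
  sin_increments p t (x0 + pi *+ 2) = sin_increments p t x0.
Proof.
have shift y : sin (x0 + pi *+ 2 + y) = sin (x0 + y).
  by rewrite addrAC sinD2pi.
by apply: eq_bigr => j _; rewrite !shift.
Qed.

Section Potential.
Variables (R : realType) (a : R).
Hypotheses (a_ge0 : 0 <= a) (a_lepi : a <= pi).
Implicit Types c u v x : R.

Local Ltac bounds := have ? := a_ge0; have ? := a_lepi; have ? := pi_gt0 R.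

(* sin minus the line of slope cos a: it increases where cos >= cos a, that is
   on [-a, a] modulo 2 pi, and decreases elsewhere. *)
Definition tilt x := sin x - cos a * x.

(* The potential: on [a - 2 pi, a + 2 pi] it is the integral from -a of the
   positive part of tilt' = cos - cos a, written out piecewise. *)
Definition pot x :=
  if x <= - a then 0
  else if x <= a then tilt x - tilt (- a)
  else if x <= pi *+ 2 - a then tilt a - tilt (- a)
  else tilt a - tilt (- a) + tilt x - tilt (pi *+ 2 - a).

Lemma pot_below x : x <= - a -> pot x = 0.
Proof. by rewrite /pot => ->. Qed.

Lemma pot_rise x : - a <= x -> x <= a -> pot x = tilt x - tilt (- a).
Proof.
move=> h1 h2; rewrite /pot h2; case: ifP => // h3.
have -> : x = - a by bounds; lra.
by rewrite subrr.
Qed.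

Lemma pot_flat x : a <= x -> x <= pi *+ 2 - a -> pot x = tilt a - tilt (- a).
Proof.
move=> h1 h2; rewrite /pot h2; case: ifP => h3.
  have -> : a = 0 by bounds; lra.
  by rewrite oppr0 subrr.
by case: ifP => // h4; have -> : x = a by bounds; lra.
Qed.

Lemma pot_rise_again x : pi *+ 2 - a <= x -> x <= pi *+ 2 + a ->
  pot x = tilt a - tilt (- a) + tilt x - tilt (pi *+ 2 - a).
Proof.
move=> h1 h2; rewrite /pot; case: ifP => h3; first by bounds; lra.
case: ifP => h4.
  have [-> ->] : a = pi /\ x = pi by bounds; lra.
  by rewrite mulr2n addrK addrK.
case: ifP => // h5; have -> : x = pi *+ 2 - a by bounds; lra.
by rewrite addrK.
Qed.

Definition pot_step u v := pot u <= pot v /\ pot u - tilt u <= pot v - tilt v.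

Lemma pot_step_trans u v x : pot_step u v -> pot_step v x -> pot_step u x.
Proof. by move=> [h1 h2] [h3 h4]; split; [apply: le_trans h3|apply: le_trans h4]. Qed.

Lemma pot_step_glue e0 e1 e2 :
  (forall u v, e0 <= u -> u <= v -> v <= e1 -> pot_step u v) ->
  (forall u v, e1 <= u -> u <= v -> v <= e2 -> pot_step u v) ->
  forall u v, e0 <= u -> u <= v -> v <= e2 -> pot_step u v.
Proof.
move=> H1 H2 u v h0 uv h2; have [ve1|e1v] := leP v e1; first exact: H1.
have [e1u|ue1] := leP e1 u; first exact: H2.
by apply: (@pot_step_trans _ e1); [apply: H1|apply: H2] => //; apply: ltW.
Qed.

Lemma tilt_incr u v : (forall c, u <= c -> c <= v -> cos a <= cos c) ->
  u <= v -> tilt u <= tilt v.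
Proof.
move=> H uv; have [c /andP[uc cv] E] := sin_mvt uv.
have := H c uc cv; have : 0 <= v - u by rewrite subr_ge0.
by rewrite /tilt; nra.
Qed.

Lemma tilt_decr u v : (forall c, u <= c -> c <= v -> cos c <= cos a) ->
  u <= v -> tilt v <= tilt u.
Proof.
move=> H uv; have [c /andP[uc cv] E] := sin_mvt uv.
have := H c uc cv; have : 0 <= v - u by rewrite subr_ge0.
by rewrite /tilt; nra.
Qed.

Lemma pot_step_window u v :
  a - pi *+ 2 <= u -> u <= v -> v <= a + pi *+ 2 -> pot_step u v.
Proof.
apply: (@pot_step_glue _ (- a)).
  move=> x y h1 h2 h3; rewrite /pot_step !pot_below; try by bounds; lra.
  split=> //; rewrite !sub0r lerN2; apply: tilt_decr => // c c1 c2.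
  by rewrite -cosD2pi; apply: cos_le_far => //; bounds; lra.
apply: (@pot_step_glue _ a).
  move=> x y h1 h2 h3; rewrite /pot_step !pot_rise; try by bounds; lra.
  have : tilt x <= tilt y.
    apply: tilt_incr => // c c1 c2; apply: cos_ge_near0 => //.
    by rewrite ler_norml; apply/andP; split; bounds; lra.
  by split; lra.
apply: (@pot_step_glue _ (pi *+ 2 - a)).
  move=> x y h1 h2 h3; rewrite /pot_step !pot_flat; try by bounds; lra.
  split=> //; rewrite lerD2l lerN2; apply: tilt_decr => // c c1 c2.
  by apply: cos_le_far => //; bounds; lra.
move=> x y h1 h2 h3; rewrite /pot_step !pot_rise_again; try by bounds; lra.
have : tilt x <= tilt y.
  apply: tilt_incr => // c c1 c2.
  have -> : cos c = cos (c - pi *+ 2) by rewrite -[in RHS]cosD2pi subrK.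
  by apply: cos_ge_near0; rewrite ?ler_norml; bounds; lra.
by split; lra.
Qed.

(* Over one period the potential grows by the integral of (cos - cos a)^+. *)
Lemma pot_period x0 : a - pi *+ 2 <= x0 -> x0 <= a ->
  pot (x0 + pi *+ 2) - pot x0 = sin a *+ 2 - (cos a * a) *+ 2.
Proof.
move=> h1 h2; have [xa|ax] := leP x0 (- a).
  rewrite (pot_below xa) (@pot_flat (x0 + pi *+ 2)) ?subr0; try by bounds; lra.
  by rewrite /tilt sinN mulrN !opprB mulr2n; bounds; lra.
rewrite (@pot_rise x0) ?(@pot_rise_again (x0 + pi *+ 2)); try by bounds; lra.
rewrite /tilt sinN mulrN sinD2pi.
have -> : sin (pi *+ 2 - a) = - sin a by rewrite addrC sinD2pi sinN.
by rewrite !mulrDr !mulrN mulr2n; bounds; lra.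
Qed.

Lemma weighted_sin_increment u v (t : R) :
  a - pi *+ 2 <= u -> u <= v -> v <= a + pi *+ 2 -> 0 <= t <= 1 ->
  t * (sin v - sin u) <= t * (cos a * (v - u)) + (pot v - pot u).
Proof.
move=> hu uv hv /andP[t0 t1]; have [pot_incr dom] := pot_step_window hu uv hv.
have : tilt v - tilt u <= pot v - pot u by lra.
have : 0 <= pot v - pot u by rewrite subr_ge0.
rewrite /tilt; nra.
Qed.

(* The key estimate: summing the previous bound telescopes the potential. *)
Lemma sin_increments_window (p : nat) (t : nat -> R) (x0 : R) : (0 < p)%N ->
  a - pi *+ 2 <= x0 -> x0 <= a ->
  (forall j, (j < p)%N -> 0 <= t j <= 1) ->
  a = pi / p%:R * \sum_(0 <= j < p) t j ->
  sin_increments p t x0 <= sin a *+ 2.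
Proof.
move=> p0 x0_ge x0_le t01 a_def; rewrite /sin_increments; set h := pi *+ 2 / p%:R.
have pR : 0 < p%:R :> R by rewrite ltr0n.
have ph : p%:R * h = pi *+ 2 by rewrite /h mulrC divfK ?gt_eqF.
have h0 : 0 <= h by rewrite /h divr_ge0 ?ler0n // mulrn_wge0 // pi_ge0.
pose x (j : nat) := x0 + j%:R * h.
have x_window j : (j <= p)%N -> a - pi *+ 2 <= x j /\ x j <= a + pi *+ 2.
  move=> jp; have jh0 : 0 <= j%:R * h by rewrite mulr_ge0 ?ler0n.
  have jh : j%:R * h <= pi *+ 2 by rewrite -ph ler_wpM2r ?ler_nat.
  by rewrite /x; split; bounds; lra.
have step j : (0 <= j < p)%N -> t j * (sin (x j.+1) - sin (x j))
    <= t j * (cos a * h) + (pot (x j.+1) - pot (x j)).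
  move=> /andP[_ jp]; have [xl _] := x_window j (ltnW jp).
  have [_ xu] := x_window j.+1 jp.
  have xh : x j.+1 - x j = h by rewrite /x -addn1 natrD; ring.
  rewrite -[in X in t j * (_ * X)]xh.
  by apply: weighted_sin_increment => //; [lra | exact: t01].
apply: le_trans (ler_sum_nat step) _.
rewrite big_split /= -mulr_suml telescope_sumr //.
rewrite /x ph mul0r addr0 pot_period // /h.
have -> : (\sum_(0 <= i < p) t i) * (cos a * (pi *+ 2 / p%:R)) = (cos a * a) *+ 2.
  by rewrite a_def; field; rewrite gt_eqF.
lra.
Qed.

Lemma sin_increments_bound (p : nat) (t : nat -> R) (x0 : R) : (0 < p)%N ->
  a - pi *+ 4 <= x0 -> x0 <= a + pi *+ 2 ->
  (forall j, (j < p)%N -> 0 <= t j <= 1) ->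
  a = pi / p%:R * \sum_(0 <= j < p) t j ->
  sin_increments p t x0 <= sin a *+ 2.
Proof.
move=> p0 x0_ge x0_le t01 a_def; have pi4 : pi *+ 4 = pi *+ 2 + pi *+ 2 :> R.
  by rewrite -mulrnDr.
have [xa|ax] := leP x0 a.
  have [ax2|xa2] := leP (a - pi *+ 2) x0; first exact: sin_increments_window.
  rewrite -sin_increments_periodic.
  by apply: sin_increments_window => //; rewrite mulr2n in pi4 *; lra.
rewrite -[x0](subrK (pi *+ 2)) sin_increments_periodic.
by apply: sin_increments_window => //; rewrite mulr2n in pi4 *; lra.
Qed.

End Potential.

Section WeightedRootsOfUnity.
Variable R : realType.
Local Open Scope complex_scope.

Lemma sum_complex (I : finType) (f g : I -> R) :
  \sum_(i : I) (f i +i* g i) = (\sum_i f i) +i* (\sum_i g i).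
Proof. by elim/big_rec3: _ => //= i x y z _ ->. Qed.

Lemma omegaX (p j : nat) : omega R p ^+ j =
  cos (j%:R * (2 * pi / p%:R)) +i* sin (j%:R * (2 * pi / p%:R)).
Proof.
elim: j => [|j IH]; first by rewrite expr0 mul0r cos0 sin0.
rewrite exprSr IH /omega; set th := 2 * pi / p%:R.
rewrite -[j.+1]addn1 natrD mulrDl mul1r cosD sinD /=.
by congr (_ +i* _); ring.
Qed.

Lemma normc_real (x : R) : 0 <= x -> Normc.normc x%:C = x.
Proof. by move=> x0; rewrite /Normc.normc /= expr0n /= addr0 sqrtr_sqr ger0_norm. Qed.

Lemma angle_exists (al be : R) : al ^+ 2 + be ^+ 2 = 1 ->
  exists phi, [/\ - pi <= phi, phi <= pi, cos phi = al & sin phi = be].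
Proof.
move=> h; have pi0 := pi_gt0 R.
have ha : -1 <= al <= 1 by apply/andP; split; nra.
have c1 : cos (acos al) = al by rewrite acosK // in_itv /=.
have s1 : sin (acos al) = `|be|.
  by rewrite sin_acos // -h addrAC subrr add0r sqrtr_sqr.
have g0 := acos_ge0 ha; have gp := acos_lepi ha.
have [b0|b0] := leP 0 be.
  by exists (acos al); split=> //; [lra | rewrite s1 ger0_norm].
exists (- acos al); split; [lra | lra | by rewrite cosN |].
by rewrite sinN s1 ltr0_norm // opprK.
Qed.

Lemma normc_projection (X Y : R) : exists phi,
  [/\ - pi <= phi, phi <= pi & Normc.normc (X +i* Y) = X * cos phi + Y * sin phi].
Proof.
rewrite /Normc.normc /=; set r := Num.sqrt _.
have [r0|rn0] := eqVneq r 0.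
  have XY0 : X ^+ 2 + Y ^+ 2 <= 0 by rewrite -sqrtr_eq0 -/r r0.
  exists 0; rewrite r0 oppr_le0 pi_ge0 cos0 sin0 mulr1 mulr0 addr0; split=> //.
  by apply/eqP; rewrite eq_sym -sqrf_eq0 eq_le sqr_ge0 andbT; nra.
have rr : r ^+ 2 = X ^+ 2 + Y ^+ 2 by rewrite sqr_sqrtr // addr_ge0 // sqr_ge0.
have unit : (X / r) ^+ 2 + (Y / r) ^+ 2 = 1.
  by rewrite !expr_div_n -mulrDl -rr divff // expf_neq0.
have [phi [phl phu cphi sphi]] := angle_exists unit.
exists phi; split=> //; rewrite cphi sphi.
have -> : X * (X / r) + Y * (Y / r) = (X ^+ 2 + Y ^+ 2) / r.
  by rewrite mulrDl !expr2 !mulrA.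
by rewrite -rr expr2 mulfK.
Qed.

Lemma weighted_roots_coords (p : nat) (t : nat -> R) :
  \sum_(j < p) (t j)%:C * omega R p ^+ j =
    (\sum_(j < p) t j * cos (j%:R * (2 * pi / p%:R))) +i*
    (\sum_(j < p) t j * sin (j%:R * (2 * pi / p%:R))).
Proof.
rewrite -sum_complex; apply: eq_bigr => j _; rewrite omegaX.
rewrite -[(t j)%:C]/(t j +i* 0) -[(_ +i* _) * (_ +i* _)]/(_ +i* _).
by congr (_ +i* _); ring.
Qed.

(* Product to difference, 2 cos u sin d = sin (u + d) - sin (u - d): the
   projection of the weighted sum on the direction phi, times 2 sin (pi / p),
   is a weighted sum of increments of sin. *)
Lemma projection_as_increments (p : nat) (t : nat -> R) (phi : R) : (0 < p)%N ->
  ((\sum_(j < p) t j * cos (j%:R * (2 * pi / p%:R))) * cos phi +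
   (\sum_(j < p) t j * sin (j%:R * (2 * pi / p%:R))) * sin phi)
    * sin (pi / p%:R) *+ 2
  = sin_increments p t (- phi - pi / p%:R).
Proof.
move=> p0; have pR : 0 < p%:R :> R by rewrite ltr0n.
rewrite /sin_increments big_mkord mulrDl !mulr_suml -big_split -sumrMnl /=.
apply: eq_bigr => j _; set u := j%:R * (2 * pi / p%:R) - phi.
have -> : - phi - pi / p%:R + j.+1%:R * (pi *+ 2 / p%:R) = u + pi / p%:R.
  by rewrite /u -[j.+1]addn1 natrD; field; rewrite gt_eqF.
have -> : - phi - pi / p%:R + j%:R * (pi *+ 2 / p%:R) = u - pi / p%:R.
  by rewrite /u; field; rewrite gt_eqF.
by rewrite sinD (sinB u) /u cosB sinB mulr2n; ring.
Qed.

Lemma weighted_roots_bound (p : nat) (t : nat -> R) : (1 < p)%N ->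
  (forall j, (j < p)%N -> 0 <= t j <= 1) ->
  Normc.normc (\sum_(j < p) (t j)%:C * omega R p ^+ j) * sin (pi / p%:R)
   <= sin (pi / p%:R * \sum_(j < p) t j).
Proof.
move=> p1 t01; have p0 : (0 < p)%N by apply: ltnW.
have pR : 0 < p%:R :> R by rewrite ltr0n.
have pi0 := pi_gt0 R.
set S := \sum_(j < p) t j; set a := pi / p%:R * S.
have d0 : 0 < pi / p%:R :> R by rewrite divr_gt0.
have dpi : pi / p%:R <= pi :> R by rewrite ler_pdivrMr // ler_peMr ?ler1n // ltW.
have [a0 api] : 0 <= a /\ a <= pi.
  have S0 : 0 <= S by apply: sumr_ge0 => j _; case/andP: (t01 j (ltn_ord j)).
  have Sp : S <= p%:R.
    apply: le_trans (_ : \sum_(j < p) (1 : R) <= _); last by rewrite sumr_const card_ord.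
    by apply: ler_sum => j _; case/andP: (t01 j (ltn_ord j)).
  rewrite /a; split; first by apply: mulr_ge0 => //; apply: ltW.
  by rewrite mulrAC ler_pdivrMr // ler_pM2l.
rewrite weighted_roots_coords; set X := \sum_(j < p) _; set Y := \sum_(j < p) _.
have [phi [phl phu ->]] := normc_projection X Y.
set z := X * cos phi + Y * sin phi.
suff : (z * sin (pi / p%:R)) *+ 2 <= sin a *+ 2 by rewrite lerMn2r.
rewrite /z projection_as_increments //.
apply: (sin_increments_bound a0 api) => //; last by rewrite big_mkord.
  by rewrite !mulrS mulr0n; lra.
by rewrite !mulrS mulr0n; lra.
Qed.

End WeightedRootsOfUnity.

Section TraceFibers.
Variables (F : finFieldType) (p w : nat).
Hypotheses (p_prime : prime p) (w_gt0 : (0 < w)%N) (cardF : #|F| = (p ^ w)%N).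

Lemma charF : p \in [pchar F]. Proof. exact: card_finPcharP cardF p_prime. Qed.

Lemma exprD_pow_char i (x y : F) : (x + y) ^+ (p ^ i) = x ^+ (p ^ i) + y ^+ (p ^ i).
Proof. by apply: exprDn_pchar; rewrite (eq_pnat _ (pcharf_eq charF)) pnatX pnat_id. Qed.

Lemma trF_add (x y : F) : trF p w (x + y) = trF p w x + trF p w y.
Proof. by rewrite /trF -big_split; apply: eq_bigr => i _; apply: exprD_pow_char. Qed.

Lemma trF0 : trF p w (0 : F) = 0.
Proof. by apply/(addIr (trF p w 0)); rewrite -trF_add !addr0 add0r. Qed.

Lemma trF_opp (x : F) : trF p w (- x) = - trF p w x.
Proof. by apply/(addIr (trF p w x)); rewrite -trF_add !addNr trF0. Qed.

(* Elements of the prime field are fixed by every power of the Frobenius map,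
   so the trace is linear over them. *)
Lemma trF_scale (c x : F) : c ^+ p = c -> trF p w (c * x) = c * trF p w x.
Proof.
move=> cp; have cpi i : c ^+ (p ^ i) = c.
  by elim: i => [|i IH]; rewrite ?expr1 // expnSr exprM IH cp.
by rewrite /trF mulr_sumr; apply: eq_bigr => i _; rewrite exprMn cpi.
Qed.

(* The trace is fixed by Frobenius: applying x |-> x^p shifts the terms
   x^(p^i) cyclically, since x^(p^w) = x. *)
Lemma trF_frobenius (x : F) : trF p w x ^+ p = trF p w x.
Proof.
pose f (i : nat) := x ^+ (p ^ i).
have -> : trF p w x ^+ p = \sum_(i < w) f i.+1.
  have frobE (y : F) : y ^+ p = pFrobenius_aut charF y by [].
  rewrite frobE rmorph_sum /=; apply: eq_bigr => i _.
  by rewrite pFrobenius_autE /f -exprM -expnSr.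
have f0 : f 0%N = x by rewrite /f expn0 expr1.
have fw : f w = x by rewrite /f -cardF expf_card.
have cyc : f 0%N + \sum_(i < w) f i.+1 = \sum_(i < w) f i + f w.
  by rewrite -(big_ord_recl w (fun i : 'I_w.+1 => f i)) big_ord_recr.
by move: cyc; rewrite f0 fw addrC => /addIr.
Qed.

Lemma natr_inj_char k l : (k < p)%N -> (l < p)%N -> (k%:R : F) = l%:R -> k = l.
Proof.
wlog kl : k l / (k <= l)%N.
  move=> H kp lp e; have [/H|/ltnW/H] := leqP k l; first exact.
  by move=> H'; apply/esym/H'.
move=> kp lp e; have : (l - k)%:R == 0 :> F by rewrite natrB // e subrr.
rewrite -(dvdn_pcharf charF) -eqn_mod_dvd // !modn_small //.
by move/eqP.
Qed.

Lemma frobenius_fixed_nat (y : F) : y ^+ p = y -> exists2 k, (k < p)%N & y = k%:R.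
Proof.
move=> hy; have p1 := prime_gt1 p_prime.
have [/mapP[k]|ny] := boolP (y \in [seq (k%:R : F) | k <- iota 0 p]).
  by rewrite mem_iota add0n => kp ->; exists k.
pose P : {poly F} := 'X^p - 'X.
have sP : size P = p.+1.
  by rewrite /P size_polyDl size_polyXn // size_polyN size_polyX ltnS.
have rP (z : F) : z ^+ p = z -> root P z.
  by move=> hz; rewrite rootE /P hornerD hornerN hornerXn hornerX hz subrr.
suff : P = 0 by move=> P0; move: sP; rewrite P0 size_poly0.
apply: (@roots_geq_poly_eq0 _ P (y :: [seq (k%:R : F) | k <- iota 0 p])).
- rewrite /= rP //=; apply/allP => z /mapP [k _ ->]; apply: rP.
  by rewrite -(pFrobenius_autE charF) pFrobenius_aut_nat.
- rewrite /= ny /= map_inj_in_uniq ?iota_uniq // => k l.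
  by rewrite !mem_iota !add0n; apply: natr_inj_char.
- by rewrite sP /= size_map size_iota.
Qed.

Lemma trnat_spec (x : F) : (trnat p w x < p)%N /\ (trnat p w x)%:R = trF p w x.
Proof.
have [k kp e] := frobenius_fixed_nat (trF_frobenius x).
rewrite /trnat; case: pickP => [j /eqP hj | H] /=; first by split.
by move: (H (Ordinal kp)); rewrite /= e eqxx.
Qed.

Lemma trnat_eq (x : F) k : (k < p)%N -> (trnat p w x == k) = (trF p w x == k%:R).
Proof.
move=> kp; have [lt e] := trnat_spec x; rewrite -e.
by apply/eqP/eqP => [->|]; last exact: natr_inj_char.
Qed.

(* The trace is not identically zero: it is a polynomial of degree p^(w-1)
   and cannot vanish at all p^w points of F. *)
Lemma trF_nonzero : exists x : F, trF p w x != 0.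
Proof.
have p0 := prime_gt0 p_prime.
apply/existsP; rewrite -negb_forall; apply/negP => /forallP tr0.
pose T := \sum_(i < w) ('X^(p ^ i) : {poly F}).
have hT x : T.[x] = trF p w x.
  by rewrite /T horner_sum; apply: eq_bigr => i _; rewrite hornerXn.
have wp : (w.-1 < w)%N by rewrite prednK.
have sT : (size T <= p ^ w)%N.
  apply: leq_trans (size_sum _ _ _) _; apply/bigmax_leqP => i _.
  rewrite size_polyXn ltn_exp2l ?prime_gt1 //; exact: ltn_ord.
have T0 : T = 0.
  apply: (@roots_geq_poly_eq0 _ T (enum F)); last by rewrite -cardE cardF.
    by apply/allP => x _; rewrite rootE hT tr0.
  exact: enum_uniq.
have : T`_(p ^ w.-1) = 1.
  rewrite /T coef_sum (bigD1 (Ordinal wp)) //= coefXn eqxx big1 ?addr0 // => i ne.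
  rewrite coefXn eqn_exp2l ?prime_gt1 //; case: eqP => // e.
  by move: ne; rewrite -val_eqE /= e eqxx.
by rewrite T0 coef0 => /esym/eqP; rewrite oner_eq0.
Qed.

Lemma trF_onto k (a : F) : (k < p)%N -> a != 0 -> exists y, trF p w (a * y) = k%:R.
Proof.
move=> kp a0; have [x1 tx1] := trF_nonzero; set t := trF p w x1 in tx1.
set c := (k%:R : F) / t.
have cp : c ^+ p = c.
  rewrite /c exprMn exprVn trF_frobenius -(pFrobenius_autE charF).
  by rewrite pFrobenius_aut_nat.
exists (a^-1 * (c * x1)); rewrite mulrA divff // mul1r trF_scale //.
by rewrite /c divfK.
Qed.

Definition fiber (A : {set F}) (a : F) (k : nat) : {set F} :=
  [set x in A | trnat p w (a * x) == k].

Definition trace_index (a x : F) : 'I_p := Ordinal (proj1 (trnat_spec (a * x))).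

Lemma card_fibers (A : {set F}) (a : F) : (\sum_(k < p) #|fiber A a k|)%N = #|A|.
Proof.
rewrite -sum1_card (partition_big (trace_index a) xpredT) //=.
apply: eq_bigr => k _; rewrite -sum1_card; apply: eq_bigl => x.
by rewrite !inE -val_eqE /=.
Qed.

(* For a != 0 all the fibers of x |-> Tr (a x) are translates of each other. *)
Lemma card_fiber_shift (a : F) k : (k < p)%N -> a != 0 ->
  #|fiber [set: F] a k| = #|fiber [set: F] a 0|.
Proof.
move=> kp a0; have [y ty] := trF_onto kp a0; have p0 := prime_gt0 p_prime.
have -> : fiber [set: F] a k = [set x + y | x in fiber [set: F] a 0].
  apply/setP => z; rewrite !inE /=; apply/idP/imsetP => [zk|[x]].
    exists (z - y); last by rewrite subrK.
    rewrite !inE /= trnat_eq // mulrBr trF_add trF_opp ty.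
    by move: zk; rewrite trnat_eq // => /eqP ->; rewrite subrr.
  by rewrite !inE /= trnat_eq // => /eqP tx ->; rewrite trnat_eq // mulrDr trF_add tx ty add0r.
by rewrite card_imset //; apply: addIr.
Qed.

Lemma card_fiber (a : F) k : (k < p)%N -> a != 0 -> #|fiber [set: F] a k| = (p ^ w.-1)%N.
Proof.
move=> kp a0; have p0 := prime_gt0 p_prime.
have := card_fibers [set: F] a; rewrite cardsT cardF.
rewrite (eq_bigr (fun _ => #|fiber [set: F] a 0|)) => [|j _]; last exact: card_fiber_shift.
rewrite sum_nat_const card_ord (card_fiber_shift kp a0) -(prednK w_gt0) expnS.
by move/eqP; rewrite eqn_pmul2l // => /eqP.
Qed.

Variable R : realType.
Local Open Scope complex_scope.

Lemma fourier_sum_fibers (A : {set F}) (a : F) :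
  \sum_(x : F) charf R A x * omega R p ^+ trnat p w (a * x) =
  \sum_(k < p) (#|fiber A a k|)%:R * omega R p ^+ k.
Proof.
rewrite (partition_big (trace_index a) xpredT) //=; apply: eq_bigr => k _.
rewrite (bigID (fun x => x \in A)) /= [X in _ + X]big1 ?addr0; last first.
  by move=> x /andP[_ /negbTE xA]; rewrite /charf xA mul0r.
rewrite (eq_bigr (fun _ => omega R p ^+ k)) => [|x /andP[/eqP <- xA]]; last first.
  by rewrite /charf xA mul1r.
rewrite sumr_const mulr_natl; congr (_ *+ _); apply: eq_card => x.
by rewrite !inE unfold_in /= -val_eqE /= andbC.
Qed.

(* For a != 0, hat(1_A)(a) is (1/p) sum_k t_k omega^k where t_k in [0, 1] is
   the proportion of the k-th trace fiber covered by A; the bound on weighted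
   sums of roots of unity then applies. *)
Lemma fourier_charf_bound (A : {set F}) (a : F) : a != 0 ->
  Normc.normc (fhat p w (@charf R F A) a) * (p%:R * sin (pi / p%:R))
   <= sin (pi * (#|A|%:R / (p ^ w)%:R)).
Proof.
move=> a0; have p0 := prime_gt0 p_prime; set N := (p ^ w.-1)%N.
have pw : (p ^ w = p * N)%N by rewrite /N -expnS prednK.
have NR : 0 < N%:R :> R by rewrite ltr0n expn_gt0 p0.
have pR : 0 < p%:R :> R by rewrite ltr0n.
pose t k := (#|fiber A a k|)%:R / N%:R : R.
have t01 k : (k < p)%N -> 0 <= t k <= 1.
  move=> kp; rewrite /t divr_ge0 ?ler0n //= ler_pdivrMr // mul1r ler_nat.
  rewrite /N -(card_fiber kp a0); apply/subset_leq_card/fintype.subsetP => x.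
  by rewrite !inE => /andP[_ ->].
have t_sum : \sum_(k < p) t k = #|A|%:R / N%:R.
  by rewrite -mulr_suml -natr_sum card_fibers.
have fhatE : fhat p w (@charf R F A) a =
    ((p%:R)^-1 : R)%:C * \sum_(k < p) (t k)%:C * omega R p ^+ k.
  rewrite /fhat fourier_sum_fibers !mulr_sumr; apply: eq_bigr => k _.
  rewrite !mulrA; congr (_ * _).
  rewrite -!(rmorph_nat (real_complex R)) -fmorphV -!rmorphM /=.
  by congr (_%:C); rewrite /t pw natrM; field; rewrite !gt_eqF.
have := weighted_roots_bound (prime_gt1 p_prime) t01.
rewrite t_sum fhatE Normc.normcM normc_real ?invr_ge0 ?ler0n //.
have -> : pi * (#|A|%:R / (p ^ w)%:R) = pi / p%:R * (#|A|%:R / N%:R) :> R.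
  by rewrite pw natrM; field; rewrite !gt_eqF.
set Z := Normc.normc _.
have -> : p%:R^-1 * Z * (p%:R * sin (pi / p%:R)) = Z * sin (pi / p%:R).
  by field; rewrite gt_eqF.
exact.
Qed.

Lemma max_fourier_charf_bound (A : {set F}) : (#|A| <= p ^ w)%N ->
  \big[Num.max/0]_(a : F | a != 0) Normc.normc (fhat p w (@charf R F A) a)
  <= sin (pi * (#|A|%:R / (p ^ w)%:R)) / (p%:R * sin (pi / p%:R)).
Proof.
move=> Ap; have p0 : 0 < p%:R :> R by rewrite ltr0n prime_gt0.
have D0 : 0 < p%:R * sin (pi / p%:R) :> R.
  by rewrite mulr_gt0 // sin_pi_div_gt0 // prime_gt1.
have x0 : 0 <= #|A|%:R / (p ^ w)%:R :> R by rewrite divr_ge0 ?ler0n.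
have x1 : #|A|%:R / (p ^ w)%:R <= 1 :> R.
  by rewrite ler_pdivrMr ?mul1r ?ler_nat // ltr0n expn_gt0 prime_gt0.
apply: bigmax_le => [|a a0]; last by rewrite ler_pdivlMr //; exact: fourier_charf_bound.
apply: divr_ge0 (ltW D0); apply: sin_ge0_pi.
by rewrite mulr_ge0 ?pi_ge0 //= ler_piMr ?pi_ge0.
Qed.

End TraceFibers.

Theorem lemma4p5 (R : realType) (p w : nat) (F : finFieldType)
  (hp : prime p) (hw : (1 <= w)%N) (hF : #|F| = (p ^ w)%N)
  (mu : R) (hmu : 0 < mu) (n : nat) (hn : (2 : R) `^ mu = n%:R)
  (A : 'I_n -> {set F}) (hA : (\sum_(i < n) #|A i|)%N = (p ^ w)%N) :
  \sum_(i < n) \big[Num.max/0]_(a : F | a != 0)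
       Normc.normc (fhat p w (@charf R F (A i)) a)
  <= (n%:R * sin (pi / n%:R)) / (p%:R * sin (pi / p%:R)).
Proof.
have pw0 : (0 < p ^ w)%N by rewrite expn_gt0 prime_gt0.
have n0 : (0 < n)%N.
  by case: n A hA {hn} => // A; rewrite big_ord0 => pw; rewrite -pw in pw0.
have Ai_le i : (#|A i| <= p ^ w)%N by rewrite -hA (bigD1 i) //= leq_addr.
pose x i := pi * (#|A i|%:R / (p ^ w)%:R) : R.
have x_range i : 0 <= x i <= pi.
  rewrite mulr_ge0 ?pi_ge0 ?divr_ge0 ?ler0n //= ler_piMr ?pi_ge0 //.
  by rewrite ler_pdivrMr ?mul1r ?ler_nat ?ltr0n.
have x_sum : \sum_(i < n) x i = pi.
  by rewrite -mulr_sumr -mulr_suml -natr_sum hA divff ?mulr1 // pnatr_eq0 -lt0n.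
have D0 : 0 < p%:R * sin (pi / p%:R) :> R.
  by rewrite mulr_gt0 ?ltr0n ?prime_gt0 // sin_pi_div_gt0 // prime_gt1.
apply: le_trans (_ : \sum_(i < n) sin (x i) / (p%:R * sin (pi / p%:R)) <= _).
  by apply: ler_sum => i _; exact: (max_fourier_charf_bound hp hw hF R (Ai_le i)).
rewrite -mulr_suml ler_pM2r ?invr_gt0 //.
by have := sum_sin_le_jensen n0 x_range; rewrite x_sum.
Qed.
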